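(* If the vertex set of a graph $G$ has a partition into bisimplices, then $G$ is well-bicovered.
   Context: All graphs are finite and simple; ''subgraph'' means induced subgraph. A vertex is simplicial if its neighborhood induces a complete graph. A bisimplex of $G$ is a maximal clique $S$ of $G$ that contains a simplicial vertex $s$ (so $s$ has no neighbor outside $S$) and a second vertex $t\in S$ that has at most one neighbor outside $S$. A graph is well-bicovered if every vertex-inclusion-maximal induced bipartite subgraph has the same order. *)

From mathcomp Require Import all_boot.
Set Implicit Arguments. Unset Strict Implicit. Unset Printing Implicit Defensive.

(* A finite simple graph: vertex type T : finType, adjacency e : rel T
   that is symmetric and irreflexive (stated as hypotheses in the theorem). *)

Section Graphs.
Variables (T : finType) (e : rel T).

Definition is_clique (S : {set T}) : bool :=
  [forall x in S, forall y in S, (x != y) ==> e x y].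

Definition is_maximal_clique (S : {set T}) : bool :=
  is_clique S && [forall S' : {set T}, (S \proper S') ==> ~~ is_clique S'].

Definition nbhd (v : T) : {set T} := [set u | e v u].

Definition simplicial (v : T) : bool := is_clique (nbhd v).

Definition bisimplex (S : {set T}) : bool :=
  is_maximal_clique S &&
  [exists s in S, simplicial s &&
     [exists t in S, (t != s) && (#|nbhd t :\: S| <= 1)]].

Definition independent (X : {set T}) : bool :=
  [forall x in X, forall y in X, ~~ e x y].

Definition induces_bipartite (B : {set T}) : bool :=
  [exists X : {set T}, (X \subset B) && independent X && independent (B :\: X)].

Definition maximal_bipartite (B : {set T}) : bool :=
  induces_bipartite B &&
  [forall B' : {set T}, (B \proper B') ==> ~~ induces_bipartite B'].

Definition well_bicovered : Prop :=
  forall B1 B2 : {set T}, maximal_bipartite B1 -> maximal_bipartite B2 ->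
    #|B1| = #|B2|.

End Graphs.

From mathcomp Require Import all_boot.
Set Implicit Arguments. Unset Strict Implicit. Unset Printing Implicit Defensive.

(* A clique meets each side of a bipartition in at most one vertex, so an
   induced bipartite subgraph B meets every bisimplex S in at most two
   vertices.  If B is maximal it meets S in at least two.  Otherwise, let s be
   the simplicial and t the second vertex of S.  All neighbours of s lie in S,
   hence at most one of them in B: put it on one side and s joins the other,
   so s is in B.  Then s is isolated in B, and the neighbours of t in B are s
   and at most one vertex outside S: put both on one side (s may switch sides
   freely) and t joins the other, so t is in B too, contradicting
   |S :&: B| <= 1.  Hence every maximal B has 2|P| vertices. *)

Lemma card_partition_setI (T : finType) (P : {set {set T}}) (D B : {set T}) :
  partition P D -> B \subset D -> #|B| = \sum_(A in P) #|A :&: B|.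
Proof.
move=> partP /subsetP sBD.
have -> : #|B| = \sum_(x in D | x \in B) 1.
  rewrite -sum1_card; apply: eq_bigl => x.
  by case: (boolP (x \in B)) => [/sBD->|]; rewrite ?andbF.
rewrite (set_partition_big_cond _ partP); apply: eq_bigr => A _.
by rewrite sum1_card; apply: eq_card => x; rewrite !inE.
Qed.

Section BisimplexPartition.
Variables (T : finType) (e : rel T).
Hypotheses (e_sym : symmetric e) (e_irr : irreflexive e).

Definition bipartition (B X : {set T}) : bool :=
  [&& X \subset B, independent e X & independent e (B :\: X)].

Lemma cliqueP (S : {set T}) :
  reflect {in S &, forall x y, x != y -> e x y} (is_clique e S).
Proof.
apply: (iffP forallP) => [cS x y xS yS | cS x].
  by move: (cS x); rewrite xS /= => /forallP /(_ y); rewrite yS /= => /implyP.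
apply/implyP => xS; apply/forallP => y.
by apply/implyP => yS; apply/implyP; apply: cS.
Qed.

Lemma independentP (X : {set T}) :
  reflect {in X &, forall x y, ~~ e x y} (independent e X).
Proof.
apply: (iffP forallP) => [iX x y xX yX | iX x].
  by move: (iX x); rewrite xX /= => /forallP /(_ y); rewrite yX.
by apply/implyP => xX; apply/forallP => y; apply/implyP; apply: iX.
Qed.

Lemma independentS (X Y : {set T}) : X \subset Y -> independent e Y -> independent e X.
Proof.
move=> /subsetP sXY /independentP iY.
by apply/independentP => x y /sXY xY /sXY; apply: iY.
Qed.

Lemma bipartiteP (B : {set T}) :
  reflect (exists X, bipartition B X) (induces_bipartite e B).
Proof.
by apply: (iffP existsP) => -[X bX]; exists X; move: bX; rewrite /bipartition andbA.
Qed.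

Lemma bipartition_swap (B X : {set T}) : bipartition B X -> bipartition B (B :\: X).
Proof.
case/and3P=> sXB iX iBX; rewrite /bipartition subsetDl iBX setDDr setDv set0U.
exact: independentS (subsetIr _ _) iX.
Qed.

Lemma card_clique_independent_le1 (S X : {set T}) :
  is_clique e S -> independent e X -> #|S :&: X| <= 1.
Proof.
move=> /cliqueP cS /independentP iX.
apply/card_le1_eqP => x y /setIP[xS xX] /setIP[yS yX].
by apply/eqP; apply: contraNT (iX x y xX yX); rewrite eq_sym; apply: cS.
Qed.

Lemma card_clique_bipartite_le2 (S B : {set T}) :
  is_clique e S -> induces_bipartite e B -> #|S :&: B| <= 2.
Proof.
move=> cS /bipartiteP[X /and3P[sXB iX iBX]].
have -> : S :&: B = S :&: X :|: S :&: (B :\: X).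
  by rewrite -setIUr -{1}(setID B X) (setIidPr sXB).
apply: leq_trans (leq_card_setU _ _) _.
by rewrite -[2]/(1 + 1) leq_add ?card_clique_independent_le1.
Qed.

Lemma bipartite_setU1 (B X : {set T}) (v : T) :
  bipartition B X -> [disjoint nbhd e v & X] -> induces_bipartite e (v |: B).
Proof.
case/and3P=> sXB iX iBX dvX; apply/bipartiteP; exists (v |: X); apply/and3P; split.
- exact: setUS.
- apply/independentP => x y; rewrite !in_setU1.
  have nvX z : z \in X -> ~~ e v z.
    by move=> zX; have := disjointFl dvX zX; rewrite inE => ->.
  case/orP=> [/eqP->|xX] /orP[/eqP->|yX]; rewrite ?e_irr ?nvX //; first by rewrite e_sym nvX.
  exact: (independentP _ iX).
- apply: independentS iBX; apply/subsetP => x.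
  by rewrite !inE negb_or => /andP[/andP[/negbTE-> ->]].
Qed.

Lemma bipartition_avoiding (B Z : {set T}) :
  induces_bipartite e B -> #|Z :&: B| <= 1 -> exists2 X, bipartition B X & [disjoint Z & X].
Proof.
move=> /bipartiteP[X bX] /card_le1_eqP Zle1.
have [dZX|] := boolP [disjoint Z & X]; first by exists X.
rewrite -setI_eq0 => /set0Pn[w /setIP[wZ wX]].
exists (B :\: X); first exact: bipartition_swap.
case/and3P: bX => /subsetP sXB _ _.
apply/pred0P => x /=; apply/andP => -[xZ /setDP[xB]].
by rewrite -(Zle1 x w) ?wX // inE ?xZ ?xB ?wZ ?(sXB w wX).
Qed.

Lemma bipartition_setD1_isolated (B X : {set T}) (s : T) :
  bipartition B X -> {in B, forall y, ~~ e s y} -> bipartition B (X :\ s).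
Proof.
case/and3P=> sXB iX iBX sB; apply/and3P; split.
- exact: subset_trans (subsetDl _ _) sXB.
- exact: independentS (subsetDl _ _) iX.
- apply/independentP => x y /setDP[xB]; rewrite in_setD1 negb_and negbK.
  move=> /orP[/eqP->|xX] /setDP[yB]; rewrite in_setD1 negb_and negbK.
    by move=> _; apply: sB.
  case/orP=> [/eqP->|yX]; first by rewrite e_sym sB.
  by apply: (independentP _ iBX); apply/setDP.
Qed.

Lemma maximal_clique_simplicial_nbhd (S : {set T}) (s : T) :
  is_maximal_clique e S -> s \in S -> simplicial e s -> nbhd e s \subset S.
Proof.
case/andP=> /cliqueP cS /forallP maxS sS /cliqueP cNs; apply/subsetP => x esx.
apply: contraT => xS.
have SxS : S \proper x |: S by rewrite properUr // sub1set.
suff : is_clique e (x |: S) by rewrite (negbTE (implyP (maxS _) SxS)).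
have exS : {in S, forall y, e x y}.
  move=> y yS; have [->|nys] := eqVneq y s.
    by rewrite e_sym; move: esx; rewrite inE.
  apply: cNs => //; last by apply: contraNneq xS => ->.
  by rewrite inE cS // eq_sym.
apply/cliqueP => a b; rewrite !in_setU1.
case/orP=> [/eqP->|aS] /orP[/eqP->|bS]; rewrite ?eqxx // => nab.
- exact: exS.
- by rewrite e_sym exS.
- exact: cS.
Qed.

Lemma maximal_bipartite_setU1 (B : {set T}) (v : T) :
  maximal_bipartite e B -> induces_bipartite e (v |: B) -> v \in B.
Proof.
case/andP=> _ /forallP/(_ (v |: B)) maxB bvB; apply: contraT => vB.
by move: maxB; rewrite properUr ?sub1set // bvB.
Qed.

Section SmallMeet.
Variables (S B : {set T}) (s : T).
Hypotheses (maxS : is_maximal_clique e S) (sS : s \in S) (simp_s : simplicial e s).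
Hypotheses (bipB : induces_bipartite e B) (SBle1 : #|S :&: B| <= 1).

Let nbhd_s_sub : nbhd e s \subset S := maximal_clique_simplicial_nbhd maxS sS simp_s.

Lemma bipartite_setU1_simplicial : induces_bipartite e (s |: B).
Proof.
have NsB : #|nbhd e s :&: B| <= 1.
  exact: leq_trans (subset_leq_card (setSI _ nbhd_s_sub)) SBle1.
by have [X bX dX] := bipartition_avoiding bipB NsB; apply: bipartite_setU1 bX dX.
Qed.

Lemma bipartite_setU1_partner (t : T) :
  s \in B -> t \in S -> #|nbhd e t :\: S| <= 1 -> induces_bipartite e (t |: B).
Proof.
move=> sB tS Nt; have /card_le1_eqP SB1 := SBle1.
have s_isolated : {in B, forall y, ~~ e s y}.
  move=> y yB; apply/negP => esy.
  have yS : y \in S by apply: (subsetP nbhd_s_sub); rewrite inE.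
  by move: esy; rewrite (SB1 y s) ?e_irr // inE ?yS ?yB ?sS ?sB.
have [X bX dX] := bipartition_avoiding bipB (leq_trans (subset_leq_card (subsetIl _ B)) Nt).
apply: bipartite_setU1 (bipartition_setD1_isolated bX s_isolated) _.
case/and3P: bX => /subsetP sXB _ _.
apply/pred0P => x /=; apply/andP => -[etx /setD1P[xs xX]].
have [xS|xS] := boolP (x \in S).
  by move: xs; rewrite (SB1 x s) ?eqxx // inE ?xS ?(sXB x xX) ?sS ?sB.
have xZ : x \in nbhd e t :\: S by rewrite inE xS etx.
by rewrite (disjointFr dX xZ) in xX.
Qed.

End SmallMeet.

Lemma card_bisimplex_maximal_bipartite_ge2 (S B : {set T}) :
  bisimplex e S -> maximal_bipartite e B -> 1 < #|S :&: B|.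
Proof.
case/andP=> maxS /existsP[s /and3P[sS simp_s /existsP[t /and3P[tS nts Nt]]]] maxB.
have bipB : induces_bipartite e B by case/andP: maxB.
rewrite ltnNge; apply/negP => SBle1.
have sB := maximal_bipartite_setU1 maxB
  (bipartite_setU1_simplicial maxS sS simp_s bipB SBle1).
have tB := maximal_bipartite_setU1 maxB
  (bipartite_setU1_partner maxS sS simp_s bipB SBle1 sB tS Nt).
move/card_le1_eqP: SBle1 nts => /(_ t s); rewrite !inE tS tB sS sB.
by move=> /(_ isT isT) ->; rewrite eqxx.
Qed.

Lemma card_bisimplex_maximal_bipartite (S B : {set T}) :
  bisimplex e S -> maximal_bipartite e B -> #|S :&: B| = 2.
Proof.
move=> bisS maxB; apply/eqP; rewrite eqn_leq card_bisimplex_maximal_bipartite_ge2 // andbT.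
apply: card_clique_bipartite_le2; first by case/andP: bisS => /andP[].
by case/andP: maxB.
Qed.

End BisimplexPartition.

Theorem mainTheorem17 (T : finType) (e : rel T)
  (e_sym : symmetric e) (e_irr : irreflexive e)
  (P : {set {set T}})
  (hP : partition P [set: T])
  (hbis : forall S, S \in P -> bisimplex e S) :
  well_bicovered e.
Proof.
have cardB B : maximal_bipartite e B -> #|B| = #|P| * 2.
  move=> maxB; rewrite (card_partition_setI hP (subsetT B)) -sum_nat_const.
  by apply: eq_bigr => S SP; rewrite (card_bisimplex_maximal_bipartite e_sym e_irr) ?hbis.
by move=> B1 B2 /cardB -> /cardB ->.
Qed.
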